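(* Let $(\mathbf{F},\Delta)$ be a poset comonoid and $(\mathbf{F},\Box)$ a poset monoid on the same poset species which form an adjoint pair with $\Delta\dashv\Box$. Then the vector space monoid $(\mathbf{k}\mathbf{F},\Box)$ is isomorphic to the dual monoid $(\mathbf{k}\mathbf{F}^*,\Delta^* )$, via the isomorphism sending each basis element $x\in\mathbf{F}[I]$ to $\omega_x^*$, where $\{\omega_x^*\}_{x\in\mathbf{F}[I]}$ is the basis of $\mathbf{k}\mathbf{F}[I]^*$ dual to the inverted basis $\{\omega_x\}_{x\in\mathbf{F}[I]}$ of $\mathbf{k}\mathbf{F}[I]$.
   Context: $\mathbf{k}$ is a field of characteristic $0$. A (connected) poset species $\mathbf{F}$ assigns to each finite set $I$ a locally finite poset $\mathbf{F}[I]$, with $\mathbf{F}[\emptyset]$ a singleton $\{1\}$, and to each bijection $f:I\to J$ an order-preserving bijection $\mathbf{F}[f]$, functorially. A poset monoid $(\mathbf{F},\Box)$: order-preserving maps $\Box_{S,T}:\mathbf{F}[S]\times\mathbf{F}[T]\to\mathbf{F}[S\sqcup T]$ for disjoint finite $S,T$, natural in bijections, associative, unital with unit $1$. A poset comonoid $(\mathbf{F},\Delta)$: order-preserving maps $\Delta_{S,T}:\mathbf{F}[S\sqcup T]\to\mathbf{F}[S]\times\mathbf{F}[T]$, natural, coassociative, counital ($\Delta_{I,\emptyset}(x)=(x,1)$, $\Delta_{\emptyset,I}(x)=(1,x)$). Adjoint pair $\Delta\dashv\Box$: $\Delta_{S,T}(x)\le(y,z)\iff x\le\Box_{S,T}(y,z)$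 for all $x,y,z$ (product order). The linearization $\mathbf{k}\mathbf{F}$ has $\mathbf{k}\mathbf{F}[I]$ the vector space with basis $\mathbf{F}[I]$, with $\Box,\Delta$ extended linearly ($\Delta_{S,T}(x)=y\otimes z$ when $\Delta_{S,T}(x)=(y,z)$); this gives a vector space monoid $(\mathbf{k}\mathbf{F},\Box)$ and a vector space comonoid $(\mathbf{k}\mathbf{F},\Delta)$. The dual monoid $(\mathbf{k}\mathbf{F}^*,\Delta^* )$ has components $\mathbf{k}\mathbf{F}[I]^*$ and multiplication $\Delta^*_{S,T}(\varphi\otimes\psi)=(\varphi\otimes\psi)\circ\Delta_{S,T}$. The inverted basis is $\omega_x=\sum_{x\le y}\mu(x,y)\,y$, $\mu$ the Möbius function of $\mathbf{F}[I]$. An isomorphism of vector space monoids is a family of linear isomorphisms, natural in bijections, commuting with the multiplications. *)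

From HB Require Import structures.
From mathcomp Require Import all_boot all_order all_algebra.
Set Implicit Arguments. Unset Strict Implicit. Unset Printing Implicit Defensive.
Import GRing.Theory.
Local Open Scope ring_scope.

(* Finite sets are modelled as finite types; the disjoint union S ⊔ T is the
   sum type (S + T). *)
Definition sumf (A A' B B' : Type) (f : A -> A') (g : B -> B') (u : A + B)
  : A' + B' := match u with inl a => inl (f a) | inr b => inr (g b) end.

Definition sum_assocr (A B C : Type) (u : (A + B) + C) : A + (B + C) :=
  match u with
  | inl (inl a) => inl a
  | inl (inr b) => inr (inl b)
  | inr c => inr (inr c)
  end.

Definition void_suml (A : Type) (u : void + A) : A :=
  match u with inl v => match v with end | inr a => a end.
Definition void_sumr (A : Type) (u : A + void) : A :=
  match u with inl a => a | inr v => match v with end end.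

(* F[I] is a finite poset for every finite set I; F[f] is given for every map,
   but only its values on bijections are constrained (and used). *)
Record poset_species := PosetSpecies {
  sp_obj :> finType -> finType;
  sp_le : forall I : finType, rel (sp_obj I);
  sp_map : forall I J : finType, (I -> J) -> sp_obj I -> sp_obj J;
  sp_one : sp_obj void;
  sp_le_refl : forall I, reflexive (@sp_le I);
  sp_le_anti : forall I, antisymmetric (@sp_le I);
  sp_le_trans : forall I, transitive (@sp_le I);
  sp_empty : forall x : sp_obj void, x = sp_one;
  sp_map_id : forall (I : finType) (x : sp_obj I), sp_map (@id I) x = x;
  sp_map_comp : forall (I J K : finType) (f : I -> J) (g : J -> K),
      bijective f -> bijective g ->
      forall x, sp_map (g \o f) x = sp_map g (sp_map f x);
  sp_map_mono : forall (I J : finType) (f : I -> J), bijective f ->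
      forall x y, sp_le x y -> sp_le (sp_map f x) (sp_map f y)
}.

Arguments sp_le {p I}.
Arguments sp_map {p I J}.
Arguments sp_one {p}.

Record poset_monoid (F : poset_species) := PosetMonoid {
  pm_mul : forall S T : finType, F S -> F T -> F (S + T)%type;
  pm_mono : forall (S T : finType) (x x' : F S) (y y' : F T),
      sp_le x x' -> sp_le y y' -> sp_le (pm_mul x y) (pm_mul x' y');
  pm_nat : forall (S S' T T' : finType) (f : S -> S') (g : T -> T'),
      bijective f -> bijective g -> forall (x : F S) (y : F T),
      sp_map (sumf f g) (pm_mul x y) = pm_mul (sp_map f x) (sp_map g y);
  pm_assoc : forall (S T U : finType) (x : F S) (y : F T) (z : F U),
      sp_map (@sum_assocr S T U) (pm_mul (pm_mul x y) z)
      = pm_mul x (pm_mul y z);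
  pm_unitl : forall (S : finType) (x : F S),
      sp_map (@void_suml S) (pm_mul sp_one x) = x;
  pm_unitr : forall (S : finType) (x : F S),
      sp_map (@void_sumr S) (pm_mul x sp_one) = x
}.

Record poset_comonoid (F : poset_species) := PosetComonoid {
  pc_co : forall S T : finType, F (S + T)%type -> F S * F T;
  pc_mono : forall (S T : finType) (x x' : F (S + T)%type),
      sp_le x x' -> sp_le (pc_co x).1 (pc_co x').1 && sp_le (pc_co x).2 (pc_co x').2;
  pc_nat : forall (S S' T T' : finType) (f : S -> S') (g : T -> T'),
      bijective f -> bijective g -> forall x : F (S + T)%type,
      pc_co (sp_map (sumf f g) x) = (sp_map f (pc_co x).1, sp_map g (pc_co x).2);
  pc_coassoc : forall (S T U : finType) (x : F ((S + T) + U)%type),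
      let y := sp_map (@sum_assocr S T U) x in
      [/\ (pc_co (pc_co x).1).1 = (pc_co y).1,
          (pc_co (pc_co x).1).2 = (pc_co (pc_co y).2).1 &
          (pc_co x).2 = (pc_co (pc_co y).2).2];
  pc_counitr : forall (S : finType) (x : F (S + void)%type),
      pc_co x = (sp_map (@void_sumr S) x, sp_one);
  pc_counitl : forall (S : finType) (x : F (void + S)%type),
      pc_co x = (sp_one, sp_map (@void_suml S) x)
}.

Definition adjoint (F : poset_species) (D : poset_comonoid F) (B : poset_monoid F)
  : Prop :=
  forall (S T : finType) (x : F (S + T)%type) (y : F S) (z : F T),
    (sp_le (pc_co D x).1 y && sp_le (pc_co D x).2 z) = sp_le x (pm_mul B y z).

Section Linearization.
Variables (k : fieldType) (F : poset_species).

(* kF[I]: the k-vector space with basis F[I] (finite), as coordinate vectors *)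
Local Notation kF I := {ffun sp_obj F I -> k}.

Definition bvec (I : finType) (x : F I) : kF I := [ffun y => (y == x)%:R].

Definition kmap (I J : finType) (f : I -> J) (a : kF I) : kF J :=
  [ffun y => \sum_(x : F I | sp_map f x == y) a x].

Definition kmul (B : poset_monoid F) (S T : finType) (a : kF S) (b : kF T)
  : kF (S + T)%type :=
  [ffun w => \sum_(x : F S) \sum_(y : F T | pm_mul B x y == w) a x * b y].

(* kF[I]^*: a linear functional φ on kF[I] is represented by its values on
   the basis F[I]; evaluation on a vector is by linear extension. *)
Local Notation kFdual I := {ffun sp_obj F I -> k}.
Definition dev (I : finType) (phi : kFdual I) (v : kF I) : k :=
  \sum_(y : F I) phi y * v y.

(* dual multiplication Δ^*(φ ⊗ ψ) = (φ ⊗ ψ) ∘ Δ, evaluated on the basis *)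
Definition dmul (D : poset_comonoid F) (S T : finType) (phi : kFdual S)
  (psi : kFdual T) : kFdual (S + T)%type :=
  [ffun x => phi (pc_co D x).1 * psi (pc_co D x).2].

(* Möbius function of the finite poset F[I], by its recursive definition
   μ(x,x) = 1, μ(x,y) = - Σ_{x ≤ z < y} μ(x,z) for x < y, μ(x,y) = 0 otherwise;
   the recursion depth is bounded by #|F[I]|, used as fuel. *)
Fixpoint mob_rec (I : finType) (n : nat) (x y : F I) : k :=
  match n with
  | 0 => 0
  | n'.+1 =>
      if x == y then 1
      else if sp_le x y then
        - \sum_(z : F I | sp_le x z && (z != y) && sp_le z y) mob_rec n' x z
      else 0
  end.
Definition mobius (I : finType) (x y : F I) : k := mob_rec #|F I| x y.

Definition omega (I : finType) (x : F I) : kF I :=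
  [ffun y => if sp_le x y then mobius x y else 0].

End Linearization.

Notation kF k F I := {ffun sp_obj F I -> GRing.Field.sort k} (only parsing).
Notation kFdual k F I := {ffun sp_obj F I -> GRing.Field.sort k} (only parsing).

From HB Require Import structures.
From mathcomp Require Import all_boot all_order all_algebra.
From Stdlib Require Import FunctionalExtensionality.
Set Implicit Arguments. Unset Strict Implicit. Unset Printing Implicit Defensive.
Import GRing.Theory.
Local Open Scope ring_scope.

(* In the basis of kF[I]^* dual to F[I], the map x |-> ω_x^* is the zeta
   transform a |-> (z |-> Σ_{x >= z} a_x): pairing ω_y with the indicator of
   the down-set of x gives Σ_{y <= z <= x} μ(y,z) = δ_{y,x}.  The zeta transform
   is inverted by Möbius inversion, it is natural because bijections act on F
   by order automorphisms, and it is multiplicative because the adjunction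
   says that w <= y □ z exactly when Δ_S w <= y and Δ_T w <= z, so the sum over
   the up-set of w of a product factors as a product of sums over the up-sets
   of Δ_S w and Δ_T w. *)

Section FiniteSums.
Variables (R : comPzRingType) (T : finType).

Lemma sum_delta (P : pred T) (x : T) (G : T -> R) :
  \sum_(y | P y) (x == y)%:R * G y = (P x)%:R * G x.
Proof.
rewrite big_mkcond (bigD1 x) //= eqxx mul1r big1 ?addr0.
  by case: (P x); rewrite ?mul1r ?mul0r.
by move=> y /negbTE; rewrite eq_sym => ->; rewrite mul0r if_same.
Qed.

Lemma big_fibres (U : finType) (g : T -> U) (P : pred U) (G : T -> R) :
  \sum_(u | P u) \sum_(t | g t == u) G t = \sum_(t | P (g t)) G t.
Proof.
rewrite (partition_big g P) //; apply: eq_bigr => u Pu; apply: eq_bigl => t.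
by case: eqP => [->|]; rewrite ?Pu ?andbF.
Qed.

Lemma sum_mul_inverseC (A B : T -> T -> R) :
    (forall i j, \sum_l A i l * B l j = (i == j)%:R) ->
  forall i j, \sum_l B i l * A l j = (i == j)%:R.
Proof.
move=> AB i j.
pose mx (C : T -> T -> R) : 'M[R]_#|T| :=
  \matrix_(p, q) C (enum_val p) (enum_val q).
have mx_mulE C C' p q :
    (mx C *m mx C') p q = \sum_l C (enum_val p) l * C' l (enum_val q).
  by rewrite !mxE (big_enum_val (fun l => C (enum_val p) l * C' l (enum_val q)));
     apply: eq_bigr => l _; rewrite !mxE.
have AB1 : mx A *m mx B = 1%:M.
  by apply/matrixP => p q; rewrite mx_mulE AB mxE (inj_eq enum_val_inj).
have /matrixP/(_ (enum_rank i) (enum_rank j)) := mulmx1C AB1.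
by rewrite mx_mulE !enum_rankK mxE (inj_eq enum_rank_inj).
Qed.

End FiniteSums.

Section MobiusFunction.
Variables (k : fieldType) (F : poset_species) (I : finType).
Implicit Types x y z w : F I.
Local Notation le := (@sp_le F I).

Definition interval_size x y := #|[pred z | le x z && le z y]|.

Lemma interval_size_lt x y z :
  le x z -> le z y -> z != y -> (interval_size x z < interval_size x y)%N.
Proof.
move=> xz zy /negP zNy; apply/proper_card/properP; split.
  apply/subsetP => w; rewrite !inE => /andP[-> wz].
  exact: sp_le_trans wz zy.
exists y; rewrite !inE ?(sp_le_trans xz zy) ?sp_le_refl //=.
by apply/negP => yz; apply: zNy; rewrite (@sp_le_anti F I z y) // zy yz.
Qed.

Lemma mob_rec_fuel n x y :
  (interval_size x y <= n)%N -> mob_rec k n x y = mob_rec k n.+1 x y.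
Proof.
elim: n y => [|n IH] y size_le /=.
  have xNy : ~~ le x y.
    apply/negP => xy; move: size_le; rewrite leqn0 => /eqP/card0_eq/(_ y).
    by rewrite !inE xy sp_le_refl.
  by case: eqP => [exy|]; [rewrite exy sp_le_refl in xNy | rewrite (negbTE xNy)].
case: eqP => // _; case: ifP => // _; congr (- _).
apply: eq_bigr => z /andP[/andP[xz zNy] zy]; apply: IH.
by rewrite -ltnS (leq_trans (interval_size_lt xz zy zNy)).
Qed.

Lemma mobiusE x y :
  mobius k x y =
    if x == y then 1
    else if le x y then - \sum_(z | le x z && (z != y) && le z y) mobius k x z
    else 0.
Proof.
have [N cardE] : exists N, #|F I| = N.+1.
  by exists #|F I|.-1; rewrite prednK //; apply/card_gt0P; exists x.
rewrite {1}/mobius cardE /=; case: eqP => // _; case: ifP => // _.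
congr (- _); apply: eq_bigr => z /andP[/andP[xz zNy] zy].
rewrite /mobius cardE; apply: mob_rec_fuel.
by rewrite -ltnS -cardE (leq_trans (interval_size_lt xz zy zNy)) ?max_card.
Qed.

Lemma mobius_zeta x w :
  \sum_(y | le x y && le y w) mobius k x y = (x == w)%:R.
Proof.
have [<-|x_neq_w] := eqVneq x w.
  rewrite (big_pred1 x) ?mobiusE ?eqxx // => y /=.
  apply/idP/eqP => [/andP[xy yx]|->]; last by rewrite sp_le_refl.
  by apply: (@sp_le_anti F I); rewrite xy yx.
have [xw|x_nle_w] := boolP (le x w); last first.
  rewrite big_pred0 // => y; apply/negP => /andP[xy yw].
  by rewrite (sp_le_trans xy yw) in x_nle_w.
rewrite (bigD1 w) /=; last by rewrite xw sp_le_refl.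
rewrite mobiusE (negbTE x_neq_w) xw.
rewrite [X in - X + _](eq_bigl (fun y => le x y && le y w && (y != w))) ?addNr //.
move=> z.
by rewrite -!andbA [(z != w) && _]andbC.
Qed.

Lemma zeta_mobius z w :
  \sum_(y | le z y && le y w) mobius k y w = (z == w)%:R.
Proof.
pose zeta x y : k := (le x y)%:R.
pose mu x y : k := if le x y then mobius k x y else 0.
have mu_zeta x y : \sum_l mu x l * zeta l y = (x == y)%:R.
  rewrite -mobius_zeta [RHS]big_mkcond; apply: eq_bigr => l _.
  by rewrite /mu /zeta; case: (le x l); case: (le l y); rewrite ?mulr1 ?mulr0 ?mul0r.
rewrite -(sum_mul_inverseC mu_zeta) [LHS]big_mkcond; apply: eq_bigr => y _.
by rewrite /mu /zeta; case: (le z y); case: (le y w); rewrite ?mul1r ?mulr0 ?mul0r.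
Qed.

End MobiusFunction.

Lemma sp_map_le (F : poset_species) (I J : finType) (f : I -> J) :
  bijective f -> forall x y : F I, sp_le (sp_map f x) (sp_map f y) = sp_le x y.
Proof.
move=> f_bij x y; apply/idP/idP; last exact: sp_map_mono.
have [g fK gK] := f_bij.
have g_bij : bijective g by exists f.
have gfE : g \o f = id by apply: functional_extensionality.
by move=> /(sp_map_mono g_bij); rewrite -!(sp_map_comp f_bij g_bij) gfE !sp_map_id.
Qed.

Section ZetaTransform.
Variables (k : fieldType) (F : poset_species).

Definition zeta_transform (I : finType) (a : {ffun F I -> k}) : {ffun F I -> k} :=
  [ffun z => \sum_(x | sp_le z x) a x].

Definition mobius_transform (I : finType) (b : {ffun F I -> k}) :
    {ffun F I -> k} :=
  [ffun x => \sum_(y | sp_le x y) mobius k x y * b y].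

Lemma zeta_transform_lin (I : finType) (c : k) (u v : {ffun F I -> k}) :
  zeta_transform [ffun y => c * u y + v y]
  = [ffun y => c * zeta_transform u y + zeta_transform v y].
Proof.
apply/ffunP => z; rewrite !ffunE mulr_sumr -big_split /=.
by apply: eq_bigr => x _; rewrite ffunE.
Qed.

Lemma zeta_transformK (I : finType) :
  cancel (@zeta_transform I) (@mobius_transform I).
Proof.
move=> a; apply/ffunP => x; rewrite ffunE.
under eq_bigr do rewrite ffunE mulr_sumr.
rewrite (exchange_big_dep xpredT) //=.
under eq_bigr do rewrite -mulr_suml mobius_zeta.
by rewrite sum_delta mul1r.
Qed.

Lemma mobius_transformK (I : finType) :
  cancel (@mobius_transform I) (@zeta_transform I).
Proof.
move=> b; apply/ffunP => z; rewrite ffunE.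
under eq_bigr do rewrite ffunE.
rewrite (exchange_big_dep xpredT) //=.
under eq_bigr do rewrite -mulr_suml zeta_mobius.
by rewrite sum_delta mul1r.
Qed.

Lemma zeta_transform_bij (I : finType) : bijective (@zeta_transform I).
Proof. exact: Bijective (@zeta_transformK I) (@mobius_transformK I). Qed.

Lemma zeta_transform_natural (I J : finType) (f : I -> J) :
  bijective f -> forall (a : {ffun F I -> k}) (x : F I),
  zeta_transform (kmap f a) (sp_map f x) = zeta_transform a x.
Proof.
move=> f_bij a x; rewrite !ffunE.
under eq_bigr do rewrite ffunE.
rewrite big_fibres; apply: eq_bigl => y; exact: sp_map_le.
Qed.

Lemma zeta_transform_bvec (I : finType) (x : F I) :
  zeta_transform (bvec k x) = [ffun z => (sp_le z x)%:R].
Proof.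
apply/ffunP => z; rewrite !ffunE.
under eq_bigr do rewrite ffunE eq_sym -[(_ == _)%:R]mulr1.
by rewrite sum_delta mulr1.
Qed.

Lemma dev_zeta_transform_omega (I : finType) (x y : F I) :
  dev (zeta_transform (bvec k x)) (omega k y) = (x == y)%:R.
Proof.
rewrite eq_sym -mobius_zeta [RHS]big_mkcond; apply: eq_bigr => z _.
rewrite zeta_transform_bvec !ffunE.
by case: (sp_le z x); case: (sp_le y z); rewrite ?mul1r ?mul0r ?andbF.
Qed.

Lemma zeta_transform_mul (D : poset_comonoid F) (B : poset_monoid F) :
    adjoint D B ->
  forall (S T : finType) (a : {ffun F S -> k}) (b : {ffun F T -> k}),
  zeta_transform (kmul B a b)
  = dmul D (zeta_transform a) (zeta_transform b).
Proof.
move=> adj S T a b; apply/ffunP => w; rewrite !ffunE big_distrlr /=.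
under eq_bigr do rewrite ffunE.
rewrite exchange_big [RHS]big_mkcond; apply: eq_bigr => x _.
rewrite big_fibres; case: ifP => [x_ge|x_Nge].
  by apply: eq_bigl => y; rewrite -adj x_ge.
by rewrite big_pred0 // => y; rewrite -adj x_Nge.
Qed.

End ZetaTransform.

Theorem mainTheorem3 (k : fieldType) (k_char0 : [pchar k] =i pred0)
    (F : poset_species) (D : poset_comonoid F) (B : poset_monoid F)
    (adj : adjoint D B) :
  exists Phi : forall I : finType, kF k F I -> kFdual k F I,
    [/\ (* each component is a linear isomorphism *)
        (forall (I : finType) (c : k) (u v : kF k F I),
            Phi I [ffun y => c * u y + v y]
            = [ffun y => c * Phi I u y + Phi I v y]),
        (forall I : finType, bijective (Phi I)),
        (* natural in bijections *)
        (forall (I J : finType) (f : I -> J), bijective f ->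
           forall (a : kF k F I) (x : F I),
             Phi J (kmap f a) (sp_map f x) = Phi I a x),
        (* commutes with the multiplications □ and Δ^* *)
        (forall (S T : finType) (a : kF k F S) (b : kF k F T),
            Phi (S + T)%type (kmul B a b) = dmul D (Phi S a) (Phi T b)) &
        (* sends x to ω_x^*, the dual basis element to the inverted basis *)
        (forall (I : finType) (x y : F I),
            dev (Phi I (bvec k x)) (omega k y) = (x == y)%:R)].
Proof.
exists (@zeta_transform k F); split.
- exact: zeta_transform_lin.
- exact: zeta_transform_bij.
- exact: zeta_transform_natural.
- exact: zeta_transform_mul.
- exact: dev_zeta_transform_omega.
Qed.
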